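(* The class of right normal bands with intersection and update is a proper quasivariety (it is not closed under homomorphic images, hence not axiomatisable by identities), and so is the class of 1-stacks with intersection and update.
   Context: A right normal band is a semigroup $(A,\circ)$ with $x\circ x=x$ and $(x\circ y)\circ z=(y\circ x)\circ z$. A right normal band with intersection $(A,\circ,\cap)$: right normal band $(A,\circ)$, semilattice $(A,\cap)$, $(x\cap y)\circ x=x\cap y$, $x\circ(y\cap z)=(x\circ y)\cap z$. A right normal band with intersection and update $(A,\circ,\cap,\diamond)$: a right normal band with intersection satisfying $s=(s\diamond t)\circ s$, $s\diamond t=s\diamond(s\diamond t)$, $s\circ t=t\circ(s\diamond t)$, and the quasi-identity $(x\cap(x\diamond y))\circ a=(x\cap(x\diamond y))\circ b\ \&\ y\circ a=y\circ b\Rightarrow x\circ a=x\circ b$. A 1-stack with intersection and update $(A,\cdot,\circ,\cap,\diamond)$: $(A,\circ,\cap,\diamond)$ a right normal band with intersection and update, $\cdot$ associative (juxtaposition), $a\circ(bc)=(a\circ b)c$, $a(b\circ c)=ab\circ ac$, $s(t\cap u)=st\cap su$, $s(t\diamond u)=st\diamond su$. *)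

Definition is_rnb {A : Type} (comp : A -> A -> A) : Prop :=
  (forall x y z, comp (comp x y) z = comp x (comp y z)) /\
  (forall x, comp x x = x) /\
  (forall x y z, comp (comp x y) z = comp (comp y x) z).

Definition is_semilattice {A : Type} (cap : A -> A -> A) : Prop :=
  (forall x y z, cap (cap x y) z = cap x (cap y z)) /\
  (forall x y, cap x y = cap y x) /\
  (forall x, cap x x = x).

Definition is_rnbi {A : Type} (comp cap : A -> A -> A) : Prop :=
  is_rnb comp /\ is_semilattice cap /\
  (forall x y, comp (cap x y) x = cap x y) /\
  (forall x y z, comp x (cap y z) = cap (comp x y) z).

Definition is_rnbiu {A : Type} (comp cap upd : A -> A -> A) : Prop :=
  is_rnbi comp cap /\
  (forall s t, s = comp (upd s t) s) /\
  (forall s t, upd s t = upd s (upd s t)) /\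
  (forall s t, comp s t = comp t (upd s t)) /\
  (forall x y a b,
      comp (cap x (upd x y)) a = comp (cap x (upd x y)) b ->
      comp y a = comp y b ->
      comp x a = comp x b).

(** 1-stack with intersection and update (A, dot, comp, cap, upd);
    dot is juxtaposition. *)
Definition is_1stack_iu {A : Type} (dot comp cap upd : A -> A -> A) : Prop :=
  is_rnbiu comp cap upd /\
  (forall a b c, dot (dot a b) c = dot a (dot b c)) /\
  (forall a b c, comp a (dot b c) = dot (comp a b) c) /\
  (forall a b c, dot a (comp b c) = comp (dot a b) (dot a c)) /\
  (forall s t u, dot s (cap t u) = cap (dot s t) (dot s u)) /\
  (forall s t u, dot s (upd t u) = upd (dot s t) (dot s u)).

Definition is_hom3 {A B : Type}
  (compA capA updA : A -> A -> A) (compB capB updB : B -> B -> B)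
  (f : A -> B) : Prop :=
  (forall x y, f (compA x y) = compB (f x) (f y)) /\
  (forall x y, f (capA x y) = capB (f x) (f y)) /\
  (forall x y, f (updA x y) = updB (f x) (f y)).

Definition is_hom4 {A B : Type}
  (dotA compA capA updA : A -> A -> A) (dotB compB capB updB : B -> B -> B)
  (f : A -> B) : Prop :=
  (forall x y, f (dotA x y) = dotB (f x) (f y)) /\
  is_hom3 compA capA updA compB capB updB f.

Definition surj {A B : Type} (f : A -> B) : Prop := forall b, exists a, f a = b.

Definition rnbiu_not_closed_under_hom_images : Prop :=
  exists (A B : Type) (compA capA updA : A -> A -> A)
         (compB capB updB : B -> B -> B) (f : A -> B),
    is_rnbiu compA capA updA /\
    is_hom3 compA capA updA compB capB updB f /\ surj f /\
    ~ is_rnbiu compB capB updB.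

Definition stack_iu_not_closed_under_hom_images : Prop :=
  exists (A B : Type) (dotA compA capA updA : A -> A -> A)
         (dotB compB capB updB : B -> B -> B) (f : A -> B),
    is_1stack_iu dotA compA capA updA /\
    is_hom4 dotA compA capA updA dotB compB capB updB f /\ surj f /\
    ~ is_1stack_iu dotB compB capB updB.

(* A quasi-identity need not survive a quotient.  Let A be the product of the
   two-element semilattice {0 < 1} (with update s ◇ t = s) and the right-zero
   band {0, 1} with an adjoined zero ⊥; both are right normal bands with
   intersection and update, hence so is A.  Collapsing the two points (0, ⊥)
   and (1, ⊥) is a congruence, and in the quotient B the instance
   x = (1,0), y = (0,1), a = (1,0), b = (0,0) of the update quasi-identity has
   both premises true (x ∩ (x ◇ y) = (1, ⊥) has become the zero) but a false
   conclusion.  Reading juxtaposition as the left projection turns every such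
   algebra with an idempotent update into a 1-stack, which gives the second
   claim with the same A, B and quotient map. *)

From Stdlib Require Import Bool.

Definition lproj {A : Type} (x _ : A) : A := x.

Definition prod_op {S T : Type} (m : S -> S -> S) (n : T -> T -> T)
  (x y : S * T) : S * T :=
  (m (fst x) (fst y), n (snd x) (snd y)).

Ltac componentwise :=
  intros; repeat match goal with p : _ * _ |- _ => destruct p end;
  unfold prod_op; simpl in *; f_equal.

Section Product.

Variables (S T : Type) (compS capS updS : S -> S -> S)
  (compT capT updT : T -> T -> T).

Lemma is_rnb_prod :
  is_rnb compS -> is_rnb compT -> is_rnb (prod_op compS compT).
Proof.
  intros [AS [IS NS]] [AT [IT NT]].
  repeat split; componentwise; auto.
Qed.

Lemma is_semilattice_prod :
  is_semilattice capS -> is_semilattice capT ->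
  is_semilattice (prod_op capS capT).
Proof.
  intros [AS [CS IS]] [AT [CT IT]].
  repeat split; componentwise; auto.
Qed.

Lemma is_rnbi_prod :
  is_rnbi compS capS -> is_rnbi compT capT ->
  is_rnbi (prod_op compS compT) (prod_op capS capT).
Proof.
  intros [RS [LS [KS DS]]] [RT [LT [KT DT]]].
  split; [apply is_rnb_prod; assumption|].
  split; [apply is_semilattice_prod; assumption|].
  split; componentwise; auto.
Qed.

Lemma is_rnbiu_prod :
  is_rnbiu compS capS updS -> is_rnbiu compT capT updT ->
  is_rnbiu (prod_op compS compT) (prod_op capS capT) (prod_op updS updT).
Proof.
  intros [BS [US [WS [XS QS]]]] [BT [UT [WT [XT QT]]]].
  split; [apply is_rnbi_prod; assumption|].
  repeat split; [componentwise; auto ..|].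
  intros [x1 x2] [y1 y2] [a1 a2] [b1 b2] Hcap Hy; unfold prod_op in *; simpl in *.
  injection Hcap as Hcap1 Hcap2; injection Hy as Hy1 Hy2.
  f_equal; eauto.
Qed.

End Product.

Lemma is_rnbiu_semilattice {S : Type} (meet : S -> S -> S) :
  is_semilattice meet -> is_rnbiu meet meet lproj.
Proof.
  intros [MA [MC MI]]; unfold lproj.
  assert (right_normal : forall x y z, meet (meet x y) z = meet (meet y x) z)
    by (intros; rewrite (MC x y); reflexivity).
  repeat split; auto.
  - intros x y; rewrite MA, (MC y x), <- MA, MI; reflexivity.
  - intros x y a b; rewrite MI; auto.
Qed.

Section RightZeroWithZero.

Variables (T : Type) (T_eq_dec : forall x y : T, {x = y} + {x <> y}).

Definition rz_comp (x y : option T) : option T :=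
  match x, y with Some _, Some _ => y | _, _ => None end.

Definition flat_meet (x y : option T) : option T :=
  match x, y with
  | Some a, Some b => if T_eq_dec a b then x else None
  | _, _ => None
  end.

Definition rz_upd (x y : option T) : option T :=
  match x, y with
  | Some _, Some _ => y
  | Some _, None => x
  | None, _ => None
  end.

Ltac decide_all :=
  repeat match goal with
  | |- context [T_eq_dec ?a ?b] => destruct (T_eq_dec a b); subst
  | H : context [T_eq_dec ?a ?b] |- _ => destruct (T_eq_dec a b); subst
  end; try congruence.

Lemma is_rnbiu_rz : is_rnbiu rz_comp flat_meet rz_upd.
Proof.
  unfold rz_comp, flat_meet, rz_upd.
  repeat split; [intros [x|]; try intros [y|]; try intros [z|]; simpl; decide_all ..|].
  (* If x ≠ y then x ∘ a and y ∘ a agree, so the second premise suffices. *)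
  intros [x|] [y|] [a|] [b|]; simpl; decide_all.
Qed.

End RightZeroWithZero.

Definition A : Type := bool * option bool.
Definition compA : A -> A -> A := prod_op andb (rz_comp bool).
Definition capA : A -> A -> A := prod_op andb (flat_meet bool bool_dec).
Definition updA : A -> A -> A := prod_op lproj (rz_upd bool).

Lemma is_rnbiu_A : is_rnbiu compA capA updA.
Proof.
  apply is_rnbiu_prod.
  - apply is_rnbiu_semilattice.
    split; [|split]; intros; [symmetry; apply andb_assoc|apply andb_comm|apply andb_diag].
  - apply is_rnbiu_rz.
Qed.

Lemma updA_idem (x : A) : updA x x = x.
Proof. destruct x as [e [c|]]; reflexivity. Qed.

Section InducedOperations.

Context {X Y : Type} (f : X -> Y) (g : Y -> X).
Hypothesis fK : forall y, f (g y) = y.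

Definition induced_op (op : X -> X -> X) (u v : Y) : Y := f (op (g u) (g v)).

Definition compatible (op : X -> X -> X) : Prop :=
  forall x x' y y', f x = f x' -> f y = f y' -> f (op x y) = f (op x' y').

Lemma induced_op_morph (op : X -> X -> X) :
  compatible op -> forall x y, f (op x y) = induced_op op (f x) (f y).
Proof. intros Hop x y; apply Hop; rewrite fK; reflexivity. Qed.

Lemma surj_of_section : surj f.
Proof. intros y; exists (g y); apply fK. Qed.

Lemma is_hom3_induced (comp cap upd : X -> X -> X) :
  compatible comp -> compatible cap -> compatible upd ->
  is_hom3 comp cap upd (induced_op comp) (induced_op cap) (induced_op upd) f.
Proof.
  intros Hcomp Hcap Hupd.
  split; [|split]; apply induced_op_morph; assumption.
Qed.

End InducedOperations.

Definition B : Type := option (bool * bool).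

Definition collapse_zero (x : A) : B :=
  match x with (e, Some c) => Some (e, c) | (_, None) => None end.

Definition lift_B (u : B) : A :=
  match u with Some (e, c) => (e, Some c) | None => (true, None) end.

Lemma collapse_zeroK (u : B) : collapse_zero (lift_B u) = u.
Proof. destruct u as [[e c]|]; reflexivity. Qed.

Definition compB := induced_op collapse_zero lift_B compA.
Definition capB := induced_op collapse_zero lift_B capA.
Definition updB := induced_op collapse_zero lift_B updA.

Lemma is_hom3_collapse_zero :
  is_hom3 compA capA updA compB capB updB collapse_zero.
Proof.
  apply is_hom3_induced; [exact collapse_zeroK| | |]; unfold compatible.
  all: intros [x1 [x2|]] [x1' [x2'|]] [y1 [y2|]] [y1' [y2'|]]; simpl;
       try discriminate; intros Ex Ey;
       try (injection Ex as <- <-); try (injection Ey as <- <-); reflexivity.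
Qed.

Lemma not_is_rnbiu_B : ~ is_rnbiu compB capB updB.
Proof.
  intros [_ [_ [_ [_ Q]]]].
  specialize (Q (Some (true, false)) (Some (false, true))
                (Some (true, false)) (Some (false, false)) eq_refl eq_refl).
  discriminate Q.
Qed.

Lemma is_1stack_iu_lproj {X : Type} (comp cap upd : X -> X -> X) :
  is_rnbiu comp cap upd -> (forall x, upd x x = x) ->
  is_1stack_iu lproj comp cap upd.
Proof.
  intros H upd_idem; pose proof H as [[[_ [comp_idem _]] [[_ [_ cap_idem]] _]] _].
  split; [exact H|]; unfold lproj; repeat split; auto.
Qed.

Lemma is_hom4_lproj {X Y : Type} (compX capX updX : X -> X -> X)
  (compY capY updY : Y -> Y -> Y) (f : X -> Y) :
  is_hom3 compX capX updX compY capY updY f ->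
  is_hom4 lproj compX capX updX lproj compY capY updY f.
Proof. split; [reflexivity|assumption]. Qed.

Theorem proposition5p10 :
  rnbiu_not_closed_under_hom_images /\ stack_iu_not_closed_under_hom_images.
Proof.
  pose proof (surj_of_section collapse_zero lift_B collapse_zeroK) as surj_collapse.
  split.
  - exists A, B, compA, capA, updA, compB, capB, updB, collapse_zero.
    split; [|split; [|split]].
    + exact is_rnbiu_A.
    + exact is_hom3_collapse_zero.
    + exact surj_collapse.
    + exact not_is_rnbiu_B.
  - exists A, B, lproj, compA, capA, updA, lproj, compB, capB, updB, collapse_zero.
    split; [|split; [|split]].
    + exact (is_1stack_iu_lproj _ _ _ is_rnbiu_A updA_idem).
    + exact (is_hom4_lproj _ _ _ _ _ _ _ is_hom3_collapse_zero).
    + exact surj_collapse.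
    + intros [rnbiu_B _]; exact (not_is_rnbiu_B rnbiu_B).
Qed.
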